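(* In the bandit setting described in the context, let $\gamma=4\eta\mathcal{G}^4m$ and $\epsilon\le\mathcal{G}^2$. Then for all $a\in\mathcal{A}$ and all $t\in\{1,\dots,n\}$, $|\langle\hat w_t-\tilde w_t,\Phi_m(a)\rangle|\le\frac{\epsilon}{\eta\mathcal{G}^2}$.
   Context: $\mathcal{A}\subset\mathbb{R}^d$ is finite; $\mathcal{K}$ is a kernel with feature map $\Phi$, $\sup_{a\in\mathcal{A}}\mathcal{K}(a,a)\le\mathcal{G}^2$; the adversary plays $w_t=\Phi(y_t)$, $y_t\in\mathbb{R}^d$, with $\mathcal{K}(y_t,y_t)\le\mathcal{G}^2$. $\Phi_m:\mathbb{R}^d\to\mathbb{R}^m$ is a finite-dimensional feature map with kernel $\hat{\mathcal{K}}_m(x,y)=\langle\Phi_m(x),\Phi_m(y)\rangle$ which is an $\epsilon$-approximation of $\mathcal{K}$, i.e. $|\mathcal{K}(x,y)-\hat{\mathcal{K}}_m(x,y)|\le\epsilon$ for all relevant pairs (all $x,y\in\mathcal{A}$ and all pairs $(a,y_t)$). The player plays $a_t\sim p_t=\gamma\nu_{\mathcal{J}}^{\mathcal{A}}+(1-\gamma)q_t$ where $q_t$ is any distribution on $\mathcal{A}$ and $\nu_{\mathcal{J}}^{\mathcal{A}}$ is a distribution on $\mathcal{A}$ whose image under $\Phi_m$ is John's distribution of $\mathrm{conv}(\Phi_m(\mathcal{A}))$, in coordinates where John's ellipsoid is the unit ball centered at the origin, so that $\mathbb{E}_{\nu_{\mathcal{J}}^{\mathcal{A}}}[\Phi_m\Phi_m^\top]=I_m/m$.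 $\eta>0$. Let $\Sigma_m^{(t)}=\mathbb{E}_{x\sim p_t}[\Phi_m(x)\Phi_m(x)^\top]$, $\hat w_t=\mathcal{K}(a_t,y_t)(\Sigma_m^{(t)})^{-1}\Phi_m(a_t)$ and $\tilde w_t=\hat{\mathcal{K}}_m(a_t,y_t)(\Sigma_m^{(t)})^{-1}\Phi_m(a_t)$. *)

From HB Require Import structures.
From mathcomp Require Import all_boot all_order all_algebra.
From mathcomp Require Import reals.
Set Implicit Arguments. Unset Strict Implicit. Unset Printing Implicit Defensive.
Import Order.TTheory GRing.Theory Num.Theory.
Local Open Scope ring_scope.

Section Defs.
Variable R : realType.

Definition dotv (k : nat) (u v : 'cV[R]_k) : R := \sum_(i < k) u i 0 * v i 0.

(* K is a (positive semidefinite, symmetric) kernel on R^d, i.e. it has a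
   feature map into some Hilbert space (Moore--Aronszajn). *)
Definition is_kernel (d : nat) (K : 'cV[R]_d -> 'cV[R]_d -> R) : Prop :=
  (forall x y, K x y = K y x) /\
  (forall (N : nat) (z : 'I_N -> 'cV[R]_d) (c : 'I_N -> R),
      0 <= \sum_(i < N) \sum_(j < N) c i * c j * K (z i) (z j)).

Definition is_distr (T : finType) (p : T -> R) : Prop :=
  (forall x, 0 <= p x) /\ \sum_x p x = 1.

Definition khat (d m : nat) (Phim : 'cV[R]_d -> 'cV[R]_m) (x y : 'cV[R]_d) : R :=
  dotv (Phim x) (Phim y).

Definition second_moment (T : finType) (d m : nat) (A : T -> 'cV[R]_d)
    (Phim : 'cV[R]_d -> 'cV[R]_m) (p : T -> R) : 'M[R]_m :=
  \sum_(x : T) p x *: (Phim (A x) *m (Phim (A x))^T).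

(* nu is John's distribution of conv(Phi_m(A)), in coordinates in which John's
   ellipsoid (maximal volume inscribed ellipsoid) is the unit ball centered at
   the origin.  By John's theorem this means: the unit ball is contained in
   conv(Phi_m(A)), nu is a distribution supported on contact points
   (points of Phi_m(A) on the unit sphere), with mean 0 and
   E_nu[Phi_m Phi_m^T] = I_m / m. *)
Definition john_distribution (T : finType) (d m : nat) (A : T -> 'cV[R]_d)
    (Phim : 'cV[R]_d -> 'cV[R]_m) (nu : T -> R) : Prop :=
  [/\ is_distr nu,
      (forall u : 'cV[R]_m, dotv u u <= 1 ->
         exists lam : T -> R, is_distr lam /\ u = \sum_x lam x *: Phim (A x)),
      (forall x, 0 < nu x -> dotv (Phim (A x)) (Phim (A x)) = 1),
      \sum_x nu x *: Phim (A x) = 0 &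
      second_moment A Phim nu = m%:R^-1 *: 1%:M].

End Defs.

(* The mixture weight [gamma] on John's distribution, whose second moment is
   [I / m], makes [Sigma_t] dominate [c I] with [c = gamma / m = 4 eta G^4].
   The two estimates differ by [(K - K_m)(a_t, y_t)] times [<Sigma_t^-1 z, x>],
   and AM-GM for the positive form of [Sigma_t] bounds the latter by
   [(|x|^2 + |z|^2) / (2 c)], where [|Phi_m b|^2 <= K(b, b) + eps <= 2 G^2]. *)

From HB Require Import structures.
From mathcomp Require Import all_boot all_order all_algebra.
From mathcomp Require Import reals.
From mathcomp Require Import ring lra.
Set Implicit Arguments.
Unset Strict Implicit.
Unset Printing Implicit Defensive.
Import Order.TTheory GRing.Theory Num.Theory.
Local Open Scope ring_scope.

Section InnerProduct.
Variables (R : realType) (k : nat).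
Implicit Types (u v w x : 'cV[R]_k) (c : R).

Lemma dotvC u v : dotv u v = dotv v u.
Proof. by apply: eq_bigr => i _; rewrite mulrC. Qed.

Lemma dotvZl c u v : dotv (c *: u) v = c * dotv u v.
Proof. by rewrite /dotv mulr_sumr; apply: eq_bigr => i _; rewrite mxE mulrA. Qed.

Lemma dotvZr c u v : dotv u (c *: v) = c * dotv u v.
Proof. by rewrite dotvC dotvZl dotvC. Qed.

Lemma dotvDr u v w : dotv u (v + w) = dotv u v + dotv u w.
Proof. by rewrite /dotv -big_split; apply: eq_bigr => i _; rewrite mxE mulrDr. Qed.

Lemma dotv0r u : dotv u 0 = 0.
Proof. by rewrite /dotv big1 // => i _; rewrite mxE mulr0. Qed.

Lemma dotv_sumr (T : finType) u (F : T -> 'cV[R]_k) :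
  dotv u (\sum_x F x) = \sum_x dotv u (F x).
Proof.
rewrite /dotv exchange_big; apply: eq_bigr => i _.
by rewrite summxE mulr_sumr.
Qed.

Lemma dotv_ge0 u : 0 <= dotv u u.
Proof. by apply: sumr_ge0 => i _; rewrite -expr2 sqr_ge0. Qed.

Lemma dotv_eq0 u : dotv u u = 0 -> u = 0.
Proof.
move=> uu0; apply/matrixP => i j; rewrite ord1 mxE.
have sq_ge0 (l : 'I_k) : 0 <= u l 0 * u l 0 by rewrite -expr2 sqr_ge0.
have /eqP := @psumr_eq0P R _ xpredT _ (fun l _ => sq_ge0 l) uu0 i isT.
by rewrite mulf_eq0 orbb => /eqP.
Qed.

Lemma dotv_sqrBZ c x u :
  dotv (x - c *: u) (x - c *: u) = dotv x x - 2 * c * dotv u x + c ^+ 2 * dotv u u.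
Proof.
rewrite /dotv !mulr_sumr -sumrB -big_split.
by apply: eq_bigr => i _; rewrite !mxE /=; ring.
Qed.

Lemma mul_outer_mx u v : u *m u^T *m v = dotv u v *: u.
Proof.
apply/matrixP => i j; rewrite ord1 !mxE mulr_suml.
by apply: eq_bigr => l _; rewrite !mxE big_ord1 !mxE; ring.
Qed.

End InnerProduct.

Section CoerciveMatrix.
Variables (R : realType) (m : nat) (S : 'M[R]_m) (c : R).
Hypothesis c_gt0 : 0 < c.
Hypothesis S_coercive : forall u, c * dotv u u <= dotv u (S *m u).

Lemma coercive_unitmx : S \in unitmx.
Proof.
rewrite -unitmx_tr unitmxE unitfE; apply/det0P => -[v v_neq0 vS0].
have Sv0 : S *m v^T = 0 by rewrite -[S]trmxK -trmx_mul vS0 trmx0.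
have vv_le0 : c * dotv v^T v^T <= 0 by rewrite -(dotv0r v^T) -Sv0.
have vv0 : dotv v^T v^T = 0.
  by apply/eqP; rewrite eq_le dotv_ge0 andbT -(pmulr_rle0 _ c_gt0).
by move/negP: v_neq0; apply; rewrite -[v]trmxK (dotv_eq0 vv0) trmx0.
Qed.

(* Expand [0 <= |x - c u|^2] for [u = S^-1 x] and use [c |u|^2 <= <u, x>]. *)
Lemma coercive_invmx_form x : c * dotv (invmx S *m x) x <= dotv x x.
Proof.
set u := invmx S *m x.
have Su : S *m u = x by rewrite mulKVmx // coercive_unitmx.
have := dotv_ge0 (x - c *: u); rewrite dotv_sqrBZ.
have := S_coercive u; rewrite Su.
have := dotv_ge0 u; have := ltW c_gt0; nra.
Qed.

End CoerciveMatrix.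

Section SecondMoment.
Variables (R : realType) (T : finType) (d m : nat).
Variables (A : T -> 'cV[R]_d) (Phim : 'cV[R]_d -> 'cV[R]_m).
Local Notation Sm := (second_moment A Phim).
Local Notation phi x := (Phim (A x)).

Lemma second_moment_form p u v :
  dotv u (Sm p *m v) = \sum_x p x * (dotv (phi x) u * dotv (phi x) v).
Proof.
rewrite mulmx_suml dotv_sumr; apply: eq_bigr => x _.
by rewrite -scalemxAl mul_outer_mx !dotvZr [dotv u _]dotvC [X in _ * X]mulrC.
Qed.

Lemma second_moment_form_ge0 p u : (forall x, 0 <= p x) -> 0 <= dotv u (Sm p *m u).
Proof.
by move=> p_ge0; rewrite second_moment_form; apply: sumr_ge0 => x _;
  rewrite mulr_ge0 // -expr2 sqr_ge0.
Qed.

(* Both [<u +- v, Sm p (u +- v)>] are nonnegative. *)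
Lemma second_moment_form_AMGM p u v : (forall x, 0 <= p x) ->
  2 * `|dotv u (Sm p *m v)| <= dotv u (Sm p *m u) + dotv v (Sm p *m v).
Proof.
move=> p_ge0; rewrite !second_moment_form.
set a := fun x => dotv (phi x) u; set b := fun x => dotv (phi x) v.
have sqr_sum s : 0 <= \sum_x p x * (a x + s * b x) ^+ 2.
  by apply: sumr_ge0 => x _; rewrite mulr_ge0 // sqr_ge0.
have expand s : \sum_x p x * (a x + s * b x) ^+ 2 =
    \sum_x p x * (a x * a x) + s ^+ 2 * \sum_x p x * (b x * b x)
    + 2 * s * \sum_x p x * (a x * b x).
  by rewrite !mulr_sumr -!big_split; apply: eq_bigr => x _ /=; ring.
rewrite -(@ger0_norm _ 2) // -normrM ler_norml.
have := sqr_sum 1; have := sqr_sum (-1).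
by rewrite !expand sqrrN expr1n !mul1r; lra.
Qed.

Lemma second_moment_lin a b p q :
  Sm (fun x => a * p x + b * q x) = a *: Sm p + b *: Sm q.
Proof.
rewrite /second_moment !scaler_sumr -big_split; apply: eq_bigr => x _ /=.
by rewrite scalerDl !scalerA.
Qed.

Lemma mixture_second_moment_coercive gamma nu q :
  Sm nu = m%:R^-1 *: 1%:M -> 0 <= gamma <= 1 -> (forall x, 0 <= q x) ->
  forall u, gamma / m%:R * dotv u u <=
    dotv u (Sm (fun x => gamma * nu x + (1 - gamma) * q x) *m u).
Proof.
move=> Snu /andP[gamma_ge0 gamma_le1] q_ge0 u.
rewrite second_moment_lin mulmxDl -!scalemxAl dotvDr !dotvZr Snu.
rewrite -scalemxAl mul1mx dotvZr mulrA lerDl mulr_ge0 ?subr_ge0 //.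
exact: second_moment_form_ge0.
Qed.

(* [<S^-1 z, x>] is the [Sm p]-form of [S^-1 z] and [S^-1 x]; apply AM-GM to it. *)
Lemma second_moment_invmx_form_bound p c x z :
  (forall x, 0 <= p x) -> 0 < c ->
  (forall u, c * dotv u u <= dotv u (Sm p *m u)) ->
  2 * c * `|dotv (invmx (Sm p) *m z) x| <= dotv x x + dotv z z.
Proof.
move=> p_ge0 c_gt0 S_coercive.
have S_unit := coercive_unitmx c_gt0 S_coercive.
have Sinv y : Sm p *m (invmx (Sm p) *m y) = y by rewrite mulKVmx.
have := second_moment_form_AMGM (invmx (Sm p) *m z) (invmx (Sm p) *m x) p_ge0.
rewrite !Sinv => AMGM.
have := coercive_invmx_form c_gt0 S_coercive x.
have := coercive_invmx_form c_gt0 S_coercive z.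
have := ltW c_gt0; nra.
Qed.

End SecondMoment.

Theorem lemma6
  (R : realType) (d m n : nat)
  (T : finType) (A : T -> 'cV[R]_d) (A_inj : injective A)
  (K : 'cV[R]_d -> 'cV[R]_d -> R) (HK : is_kernel K)
  (G eta eps : R) (G_pos : 0 < G) (eta_pos : 0 < eta)
  (HKA : forall a : T, K (A a) (A a) <= G ^+ 2)
  (y : nat -> 'cV[R]_d)
  (Hy : forall t, (1 <= t <= n)%N -> K (y t) (y t) <= G ^+ 2)
  (Phim : 'cV[R]_d -> 'cV[R]_m)
  (Happ_AA : forall a b : T, `|K (A a) (A b) - khat Phim (A a) (A b)| <= eps)
  (Happ_Ay : forall (a : T) t, (1 <= t <= n)%N ->
      `|K (A a) (y t) - khat Phim (A a) (y t)| <= eps)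
  (nu : T -> R) (Hnu : john_distribution A Phim nu)
  (gamma : R) (Hgamma : gamma = 4%:R * eta * G ^+ 4 * m%:R)
  (Hgamma1 : gamma <= 1)
  (Heps : eps <= G ^+ 2)
  (q : nat -> T -> R) (Hq : forall t, (1 <= t <= n)%N -> is_distr (q t))
  (at_ : nat -> T) :
  let p t x := gamma * nu x + (1 - gamma) * q t x in
  let Sigma t := second_moment A Phim (p t) in
  let what t := K (A (at_ t)) (y t) *: (invmx (Sigma t) *m Phim (A (at_ t))) in
  let wtil t := khat Phim (A (at_ t)) (y t) *: (invmx (Sigma t) *m Phim (A (at_ t))) in
  forall (a : T) (t : nat), (1 <= t <= n)%N ->
    `|dotv (what t - wtil t) (Phim (A a))| <= eps / (eta * G ^+ 2).
Proof.
move=> p Sigma what wtil a t t_range.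
have eta_G2_gt0 : 0 < eta * G ^+ 2 by rewrite mulr_gt0 // exprn_gt0.
have [m_eq0 | m_gt0] := posnP m.
  subst m; rewrite /dotv big_ord0 normr0 divr_ge0 ?(ltW eta_G2_gt0) //.
  exact: le_trans (normr_ge0 _) (Happ_AA a a).
have [[nu_ge0 _] _ _ _ Snu] := Hnu; have [q_ge0 _] := Hq t t_range.
have c_def : gamma / m%:R = 4 * eta * G ^+ 4.
  by rewrite Hgamma mulfK // pnatr_eq0 -lt0n.
have gamma_ge0 : 0 <= gamma.
  by rewrite Hgamma !mulr_ge0 ?ler0n ?exprn_ge0 // ltW.
have p_ge0 x : 0 <= p t x by rewrite addr_ge0 ?mulr_ge0 ?subr_ge0.
have Sigma_coercive := mixture_second_moment_coercive Snu
  (introT andP (conj gamma_ge0 Hgamma1)) q_ge0.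
have c_gt0 : 0 < gamma / m%:R by rewrite c_def !mulr_gt0 ?exprn_gt0.
have form_bound := second_moment_invmx_form_bound
  (Phim (A a)) (Phim (A (at_ t))) p_ge0 c_gt0 Sigma_coercive.
have phi_sqr b : dotv (Phim (A b)) (Phim (A b)) <= 2 * G ^+ 2.
  by have := Happ_AA b b; have := HKA b; rewrite ler_norml /khat; lra.
rewrite /what /wtil -scalerBl dotvZl normrM ler_pM ?Happ_Ay //.
rewrite -[_^-1]mul1r ler_pdivlMr //.
have := phi_sqr a; have := phi_sqr (at_ t); move: form_bound.
rewrite c_def (_ : G ^+ 4 = G ^+ 2 * G ^+ 2) -?exprD //.
have := exprn_gt0 2 G_pos; have := eta_pos; nra.
Qed.
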